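(* Let $P$ and $Q$ be finite $(3+1)$-free posets with the same skeleton. Suppose $P$ and $Q$ have compatible listings $(X_1,\dots,X_m)$ and $(Y_1,\dots,Y_m)$ that yield the same word $w\in\Sigma^*$, and that for each $i$, if $X_i$ (equivalently $Y_i$) is a clone set then $|X_i|=|Y_i|$, and if $X_i$ is a tangle then $X_i$ and $Y_i$ are isomorphic as induced subposets. Then $P\cong Q$. In other words, a $(3+1)$-free poset is determined up to isomorphism by its skeleton together with, for each letter of the skeleton, the cardinality of the corresponding clone set or the isomorphism class of the corresponding tangle.
   Context: A poset $P$ is $(3+1)$-free if there are no $a,b,c,d\in P$ with $a<b<c$ and $d$ incomparable to each of $a,b,c$. For $a\in P$ let $D_a=\{x\in P:x<a\}$, $U_a=\{x\in P:x>a\}$. Write $a\mathrel{\top}b$ if neither of $D_a,D_b$ contains the other, $a\mathrel{\bot}b$ if neither of $U_a,U_b$ contains the other, and $a\approx b$ if $D_a=D_b$ and $U_a=U_b$. A top of a tangle is a subset $A\subseteq P$ with $|A|\ge2$ that is a connected component of the graph on $P$ with edges $\{a,b\}$ for $a\mathrel{\top}b$; a bottom of a tangle is defined likewise using $\bot$. A top $A$ and bottom $B$ are matched if there are distinct $a_1,a_2\in A$, $b_1,b_2\in B$ with $b_1<a_1$, $b_2<a_2$ and the pairs $\{a_1,a_2\},\{b_1,b_2\},\{b_1,a_2\},\{b_2,a_1\}$ incomparable; in a $(3+1)$-free poset this is a perfect matching. A tangle is a matched pair $(A,B)$, identified with $A\cup B$ and its induced subposet; a clone set is an equivalence class of $\approx$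 on the vertices in no tangle; clone sets and tangles are the parts of $P$. Levels: $L_1$ = minimal elements of $P$, $L_{k+1}$ = minimal elements of $P\setminus(L_1\cup\dots\cup L_k)$, and $\ell(a)=k$ if $a\in L_k$; each clone set lies in a single level and each tangle lies in $L_i\cup L_{i+1}$ for some $i$. A compatible listing is an ordering $(X_1,\dots,X_m)$ of all parts such that for $a\in X_i$, $b\in X_j$, $i\ne j$: $a<b$ iff $\ell(a)\le\ell(b)-2$, or $\ell(a)=\ell(b)-1$ and $i<j$ (compatible listings exist). Let $\Sigma=\{c_1,c_2,\dots\}\cup\{t_{12},t_{23},\dots,t_{i\,i+1},\dots\}$, $\Sigma^*$ the free monoid on $\Sigma$, and $M$ the quotient of $\Sigma^*$ by the commutation relations $c_ic_j=c_jc_i$ if $|i-j|\ge2$; $c_it_{j\,j+1}=t_{j\,j+1}c_i$ if $i\le j-2$ or $i\ge j+3$; $t_{i\,i+1}t_{j\,j+1}=t_{j\,j+1}t_{i\,i+1}$ if $|i-j|\ge3$. The word of a compatible listing replaces each clone set at level $i$ by $c_i$ and each tangle in levels $\{i,i+1\}$ by $t_{i\,i+1}$; the words of all compatible listings of $P$ have the same image in $M$, called the skeleton of $P$. *)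

(* A finite poset is a finType T with a strict order r : rel T
   (r a b means a < b). *)
From mathcomp Require Import all_boot.
From Stdlib Require Import Relation_Operators.
Set Implicit Arguments.
Unset Strict Implicit.
Unset Printing Implicit Defensive.

Section Poset.
Variables (T : finType) (r : rel T).

Definition strict_order : Prop := irreflexive r /\ transitive r.

Definition incomp (a b : T) : bool := [&& a != b, ~~ r a b & ~~ r b a].

Definition free31 : Prop :=
  ~ exists a b c d : T,
      [&& r a b, r b c, incomp d a, incomp d b & incomp d c].

Definition Dset (a : T) : {set T} := [set x | r x a].
Definition Uset (a : T) : {set T} := [set x | r a x].

Definition top_rel (a b : T) : bool :=
  ~~ (Dset a \subset Dset b) && ~~ (Dset b \subset Dset a).
Definition bot_rel (a b : T) : bool :=
  ~~ (Uset a \subset Uset b) && ~~ (Uset b \subset Uset a).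
Definition approx (a b : T) : bool := (Dset a == Dset b) && (Uset a == Uset b).

Definition is_top (A : {set T}) : bool :=
  (2 <= #|A|) && [exists a, A == [set x | connect top_rel a x]].
Definition is_bot (B : {set T}) : bool :=
  (2 <= #|B|) && [exists b, B == [set x | connect bot_rel b x]].

Definition matched (A B : {set T}) : bool :=
  [exists a1, exists a2, exists b1, exists b2,
     [&& a1 \in A, a2 \in A, b1 \in B, b2 \in B, a1 != a2, b1 != b2,
         r b1 a1, r b2 a2, incomp a1 a2, incomp b1 b2, incomp b1 a2
       & incomp b2 a1]].

(* a tangle, identified with the union A :|: B of a matched top and bottom *)
Definition is_tangle (S : {set T}) : bool :=
  [exists A : {set T}, exists B : {set T},
     [&& is_top A, is_bot B, matched A B & S == A :|: B]].

Definition in_tangle (x : T) : bool := [exists S, is_tangle S && (x \in S)].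

Definition is_clone (S : {set T}) : bool :=
  [exists x, ~~ in_tangle x && (S == [set y | ~~ in_tangle y && approx x y])].

Definition is_part (S : {set T}) : bool := is_clone S || is_tangle S.

(* below k = L_1 :|: ... :|: L_k *)
Fixpoint below (k : nat) : {set T} :=
  match k with
  | 0 => set0
  | k'.+1 => below k' :|:
      [set x | (x \notin below k') &&
               [forall y, (y \notin below k') ==> ~~ r y x]]
  end.

Definition Lev (k : nat) : {set T} := below k :\: below k.-1.

Definition level (a : T) : nat :=
  head 0 [seq k <- iota 1 #|T| | a \in Lev k].

Definition compatible (X : seq {set T}) : Prop :=
  [/\ uniq X, all is_part X, (forall S, is_part S -> S \in X) &
      forall i j, i < size X -> j < size X -> i != j ->
        forall a b, a \in nth set0 X i -> b \in nth set0 X j ->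
          r a b = (level a + 2 <= level b) ||
                  ((level a + 1 == level b) && (i < j))].
End Poset.

(* The alphabet Sigma: C i = c_i, Tl i = t_{i i+1} *)
Inductive letter := C of nat | Tl of nat.

Definition comm_letters (x y : letter) : bool :=
  match x, y with
  | C i, C j => (i + 2 <= j) || (j + 2 <= i)
  | C i, Tl j => (i + 2 <= j) || (j + 3 <= i)
  | Tl j, C i => (i + 2 <= j) || (j + 3 <= i)
  | Tl i, Tl j => (i + 3 <= j) || (j + 3 <= i)
  end.

Inductive trace_step : seq letter -> seq letter -> Prop :=
| TraceStep u v x y : comm_letters x y ->
    trace_step (u ++ x :: y :: v) (u ++ y :: x :: v).

Definition trace_eq : seq letter -> seq letter -> Prop :=
  clos_refl_trans (seq letter) trace_step.

Definition part_letter (T : finType) (r : rel T) (S : {set T}) : letter :=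
  if is_tangle r S then Tl (foldr minn #|T| [seq level r x | x in S])
  else C (odflt 0 (omap (level r) [pick x in S])).

Definition word (T : finType) (r : rel T) (X : seq {set T}) : seq letter :=
  map (part_letter r) X.

Definition same_skeleton (T T' : finType) (r : rel T) (r' : rel T') : Prop :=
  exists X Y, [/\ compatible r X, compatible r' Y & trace_eq (word r X) (word r' Y)].

Definition poset_iso (T T' : finType) (r : rel T) (r' : rel T') : Prop :=
  exists f : T -> T', bijective f /\ forall a b, r a b = r' (f a) (f b).

Definition induced_iso (T T' : finType) (r : rel T) (r' : rel T')
    (X : {set T}) (Y : {set T'}) : Prop :=
  exists f : T -> T', [/\ {in X &, injective f}, f @: X = Y &
                          {in X &, forall a b, r a b = r' (f a) (f b)}].

From mathcomp Require Import all_boot zify.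
From Stdlib Require Import ClassicalEpsilon.
Set Implicit Arguments.
Unset Strict Implicit.
Unset Printing Implicit Defensive.

(* The level of [x] is one more than the largest level of an element below [x].  In a
   (3+1)-free poset, two elements joined by a top (resp. bottom) edge lie on the same level, no
   element has both a top and a bottom edge, and a matched top and bottom lie on consecutive
   levels; every element of a tangle at its lower (resp. upper) level has a neighbour in the
   tangle above (resp. below) it.  Hence the parts of a compatible listing partition the
   poset, and the letter of a part determines the levels of its elements, so an isomorphism
   of each part onto the corresponding part of the other listing preserves levels.  By
   compatibility, the order between elements of different parts depends only on their levels
   and on the positions of their parts, so these isomorphisms glue together. *)

(* [lia] case-splits on every boolean hypothesis in the context; drop all but the
   [nat] comparisons first. *)
Ltac nat_arith :=
  repeat match goal with H : is_true ?b |- _ =>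
    lazymatch b with leq _ _ => fail | _ => clear H end end; lia.

Lemma component_neighbour (T : finType) (e : rel T) a x : connect_sym e ->
  1 < #|[set y | connect e a y]| -> connect e a x -> exists y, e x y.
Proof.
move=> sym_e card_gt1 ax.
move: card_gt1; rewrite (cardsD1 x) inE ax add1n ltnS => /card_gt0P[x'].
rewrite !inE => /andP[x'x ax'].
have : connect e x x' by rewrite sym_e in ax; apply: connect_trans ax ax'.
case/connectP => [[|y p]] /=; first by move=> _ x'E; rewrite x'E eqxx in x'x.
by case/andP => exy _ _; exists y.
Qed.

Lemma connect_top_below (T : finType) (r : rel T) (B : {set T}) u v :
  {in B, forall b y, bot_rel r b y -> y \in B} -> connect (top_rel r) u v ->
  (exists2 b, b \in B & r b u) -> exists2 b, b \in B & r b v.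
Proof.
move=> closedB /connectP[p]; elim: p u => [|w p IH] u /=; first by move=> _ ->.
case/andP => tuw pw lv [b bB rbu]; apply: IH pw lv _.
have [rbw | nbw] := boolP (r b w); first by exists b.
case/andP: tuw => _ /subsetPn[y]; rewrite !inE => ryw nyu.
exists y => //; apply: (closedB b) => //.
by apply/andP; split; apply/subsetPn; [exists u | exists w]; rewrite !inE.
Qed.

Lemma foldr_minn_eq n s l : l <= n -> l \in s -> all (leq l) s -> foldr minn n s = l.
Proof.
move=> ln; elim: s => //= k s IH; rewrite inE => /predU1P[<- | ls] /andP[lk ls_ge].
  by apply/minn_idPl; elim: s ls_ge {IH} => //= m s IHs /andP[lm /IHs]; rewrite leq_min lm.
by rewrite IH //; apply/minn_idPr.
Qed.

Section Poset.
Variables (T : finType) (r : rel T).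

Lemma belowS k : below r k.+1 = below r k :|:
  [set x | (x \notin below r k) && [forall y, (y \notin below r k) ==> ~~ r y x]].
Proof. by []. Qed.

Lemma below_subset k m : k <= m -> below r k \subset below r m.
Proof.
elim: m => [|m IH]; first by rewrite leqn0 => /eqP->.
rewrite leq_eqVlt => /predU1P[->//|/IH km].
by apply: subset_trans km _; rewrite belowS subsetUl.
Qed.

Lemma add_minimal_layer (B : {set T}) : {in B, forall x y, r y x -> y \in B} ->
  B :|: [set x | (x \notin B) && [forall y, (y \notin B) ==> ~~ r y x]] =
  [set x | [forall y, r y x ==> (y \in B)]].
Proof.
move=> downB; apply/setP => x; rewrite !inE.
have [xB | _] /= := boolP (x \in B).
  by apply/esym/forallP => y; apply/implyP; apply: downB.
by apply: eq_forallb => y; case: (r y x); case: (y \in B).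
Qed.

Lemma below_succ k : below r k.+1 = [set x | [forall y, r y x ==> (y \in below r k)]].
Proof.
elim: k => [|k IH]; rewrite belowS add_minimal_layer // => x; first by rewrite inE.
rewrite {1}IH inE => /forallP xk y /(implyP (xk y)).
exact/subsetP/below_subset.
Qed.

Hypothesis ord_r : strict_order r.

Lemma r_irr x : r x x = false.
Proof. by case: ord_r => irr _; apply: irr. Qed.

Lemma r_trans x y z : r x y -> r y z -> r x z.
Proof. by case: ord_r => _ tr; apply: tr. Qed.

Lemma exists_minimal (C : {set T}) x : x \in C ->
  exists2 m, m \in C & forall y, y \in C -> ~~ r y m.
Proof.
move=> xC; case: (arg_minnP (fun m => #|Dset r m|) xC) => m mC mmin.
exists m => // y yC; apply/negP => rym.
suff : #|Dset r y| < #|Dset r m| by rewrite ltnNge mmin.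
apply: proper_card; apply/properP; split; last by exists y; rewrite !inE ?rym ?r_irr.
by apply/subsetP => z; rewrite !inE => /r_trans; apply.
Qed.

Lemma below_card k : below r k = setT \/ k <= #|below r k|.
Proof.
elim: k => [|k [IH|IH]]; [by right | by left; rewrite /= IH setTU |].
have [full|] := eqVneq (below r k) setT; first by left; rewrite belowS full setTU.
rewrite -subTset => /subsetPn[x _ xk].
have [|m mk mmin] := @exists_minimal (~: below r k) x; first by rewrite inE.
right; apply: leq_ltn_trans IH (proper_card _); apply/properP.
split; first exact: below_subset.
exists m; last by rewrite inE in mk.
rewrite below_succ inE; apply/forallP => y; apply/implyP => rym.
by apply: contraTT rym => yk; apply: mmin; rewrite inE.
Qed.

Lemma below_total : below r #|T| = setT.
Proof.
case: (below_card #|T|) => // card_le.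
by apply/eqP; rewrite eqEcard subsetT cardsT card_le.
Qed.

Lemma in_below_level x k : (x \in below r k) = (level r x <= k).
Proof.
have ex : exists k, x \in below r k by exists #|T|; rewrite below_total inE.
case: (ex_minnP ex) => m xm minm.
have m_gt0 : 0 < m by case: m xm {minm} => [|//]; rewrite inE.
have mT : m <= #|T| by apply: minm; rewrite below_total inE.
have levE j : (x \in Lev r j) = (j == m).
  rewrite /Lev inE; apply/andP/eqP => [[xj' xj] | ->].
    apply/eqP; rewrite eqn_leq minm // andbT; case: j xj' xj => [|j] xj' xj.
      by rewrite inE in xj.
    by rewrite ltnNge; apply: contra xj' => /below_subset/subsetP; apply.
  split=> //; apply/negP => /minm; case: (m) m_gt0 => //= n _; by rewrite ltnn.
have -> : level r x = m.
  by rewrite /level (eq_filter levE) filter_pred1_uniq ?iota_uniq // mem_iota m_gt0 add1n ltnS.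
by apply/idP/idP => [/minm // | /below_subset/subsetP]; apply.
Qed.

Lemma level_gt0 x : 0 < level r x.
Proof. by rewrite ltnNge -in_below_level inE. Qed.

Lemma level_le_card x : level r x <= #|T|.
Proof. by rewrite -in_below_level below_total inE. Qed.

Lemma rel_level_lt x y : r x y -> level r x < level r y.
Proof.
move=> rxy; have := level_gt0 y; case ly: (level r y) => [//|k] _.
have : y \in below r k.+1 by rewrite in_below_level ly.
by rewrite below_succ inE => /forallP/(_ x)/implyP/(_ rxy); rewrite in_below_level.
Qed.

Lemma level_norel x y : level r y <= level r x -> ~~ r x y.
Proof. by apply: contraL => /rel_level_lt; rewrite -ltnNge. Qed.

Lemma exists_pred_level x k : level r x = k.+2 -> exists2 y, r y x & level r y = k.+1.
Proof.
move=> lx; have : x \notin below r k.+1 by rewrite in_below_level lx ltnn.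
rewrite below_succ inE negb_forall => /existsP[y]; rewrite negb_imply => /andP[ryx yk].
exists y => //; have := rel_level_lt ryx; rewrite in_below_level -ltnNge in yk.
by rewrite lx; nat_arith.
Qed.

Hypothesis free_r : free31 r.

Ltac by_level := apply: level_norel; nat_arith.

Lemma free31_chain a b c d : r a b -> r b c ->
  ~~ r d a -> ~~ r a d -> ~~ r d b -> ~~ r b d -> ~~ r d c -> ~~ r c d -> False.
Proof.
move=> rab rbc nda nad ndb nbd ndc ncd; apply: free_r; exists a, b, c, d.
have da : d != a by apply: contraNneq ndb => ->.
have db : d != b by apply: contraNneq ndc => ->.
have dc : d != c by apply: contraNneq nbd => ->.
by rewrite rab rbc /incomp da db dc nda nad ndb nbd ndc ncd.
Qed.

Lemma Dset_notsub_level a b : ~~ (Dset r a \subset Dset r b) -> level r b <= level r a.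
Proof.
case/subsetPn => x; rewrite !inE => rxa nxb; rewrite leqNgt; apply/negP => lab.
have nab : ~~ r a b by apply: contra nxb; apply: r_trans.
have lxa := rel_level_lt rxa; have lx0 := level_gt0 x.
case lb: (level r b) lab => [|[|[|k]]] lab; try nat_arith.
have [c rcb lc] := exists_pred_level lb.
have [d rdc ld] := exists_pred_level lc.
have rda : r d a.
  apply/negPn/negP => nda; apply: (free31_chain (d := a) rdc rcb) => //; last by_level.
  - by apply: contra nab => rad; apply: r_trans (r_trans rad rdc) rcb.
  - by apply: contra nab => rac; apply: r_trans rac rcb.
  - by_level.
have rdx : r d x.
  apply/negPn/negP => ndx; apply: (free31_chain (d := x) rdc rcb) => //; last by_level.
  - by apply: contra nxb => rxd; apply: r_trans (r_trans rxd rdc) rcb.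
  - by apply: contra nxb => rxc; apply: r_trans rxc rcb.
  - by_level.
by have := rel_level_lt rdx; nat_arith.
Qed.

Lemma Uset_notsub_level a b : ~~ (Uset r a \subset Uset r b) -> level r a <= level r b.
Proof.
case/subsetPn => y; rewrite !inE => ray nby; rewrite leqNgt; apply/negP => lba.
have lay := rel_level_lt ray; have lb0 := level_gt0 b.
case la: (level r a) lba => [|[|k]] lba; try nat_arith.
have [c rca lc] := exists_pred_level la.
apply: (free31_chain (d := b) rca ray) => //; try by_level.
- by apply: contra nby => rbc; apply: r_trans (r_trans rbc rca) ray.
- by apply: contra nby => rba; apply: r_trans rba ray.
Qed.

Lemma top_rel_level a b : top_rel r a b -> level r a = level r b.
Proof.
by case/andP => /Dset_notsub_level ba /Dset_notsub_level ab; apply/eqP; rewrite eqn_leq ab.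
Qed.

Lemma bot_rel_level a b : bot_rel r a b -> level r a = level r b.
Proof.
by case/andP => /Uset_notsub_level ab /Uset_notsub_level ba; apply/eqP; rewrite eqn_leq ab.
Qed.

Lemma top_bot_rel_exclusive x x' x'' : top_rel r x x' -> bot_rel r x x'' -> False.
Proof.
move=> top bot; have lx' := top_rel_level top; have lx'' := bot_rel_level bot.
case/andP: top => /subsetPn[u]; rewrite !inE => rux nux' /subsetPn[v]; rewrite !inE => rvx' nvx.
case/andP: bot => /subsetPn[w]; rewrite !inE => rxw nx''w /subsetPn[z]; rewrite !inE => rx''z nxz.
have lux := rel_level_lt rux; have lvx' := rel_level_lt rvx'.
have lxw := rel_level_lt rxw; have lx''z := rel_level_lt rx''z.
have rx'w : r x' w.
  by apply/negPn/negP => nx'w; apply: (free31_chain (d := x') rux rxw) => //; by_level.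
have rvx'' : r v x''
  by apply/negPn/negP => nvx''; apply: (free31_chain (d := x'') rvx' rx'w) => //; by_level.
by apply: (free31_chain (d := x) rvx'' rx''z) => //; by_level.
Qed.

Lemma connect_level (e : rel T) a b : (forall u v, e u v -> level r u = level r v) ->
  connect e a b -> level r a = level r b.
Proof.
move=> inv ab; apply/eqP; rewrite eq_sym.
rewrite -[_ == _]/(b \in [pred x | level r x == level r a]) -(closed_connect _ ab).
  by rewrite inE.
by move=> u v /inv; rewrite !inE => ->.
Qed.

Definition tangle_layered (S : {set T}) (l : nat) : Prop := [/\
  (exists2 x, x \in S & level r x = l),
  {in S, forall x, level r x = l \/ level r x = l.+1},
  {in S, forall x, level r x = l.+1 ->
     (exists y, top_rel r x y) /\ (exists2 y, y \in S & r y x)} &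
  {in S, forall x, level r x = l ->
     (exists y, bot_rel r x y) /\ (exists2 y, y \in S & r x y)}].

Lemma matched_levels A B : is_top r A -> is_bot r B -> matched r A B ->
  exists l, {in B, forall b, level r b = l} /\ {in A, forall a, level r a = l.+1}.
Proof.
case/andP => _ /existsP[a0 /eqP EA] /andP[_ /existsP[b0 /eqP EB]].
have levA a : a \in A -> level r a = level r a0.
  by rewrite EA inE => /(connect_level top_rel_level) ->.
have levB b : b \in B -> level r b = level r b0.
  by rewrite EB inE => /(connect_level bot_rel_level) ->.
case/existsP => a1 /existsP[a2 /existsP[b1 /existsP[b2]]].
case/and5P => a1A a2A b1B _ /and5P[_ _ rba1 _ /and4P[_ _ /and3P[_ nb1a2 na2b1] _]].
exists (level r b0); split => // a aA; rewrite levA //.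
have := rel_level_lt rba1; rewrite (levA a1) // (levB b1) // => lt_ba.
have la2 := levA _ a2A; have lb1 := levB _ b1B; have lb0 := level_gt0 b0.
case: (ltngtP (level r a0) (level r b0).+1) => // lt2; first by nat_arith.
case ea2: (level r a2) => [|[|k]]; try nat_arith.
have [c rca2 lc] := exists_pred_level ea2.
case: k ea2 lc => [|k] ea2 lc; first by nat_arith.
have [d rdc ld] := exists_pred_level lc.
exfalso; apply: (free31_chain (d := b1) rdc rca2) => //; try by_level.
- by apply: contra nb1a2 => rb1d; apply: r_trans (r_trans rb1d rdc) rca2.
- by apply: contra nb1a2 => rb1c; apply: r_trans rb1c rca2.
Qed.

Lemma matched_rel A B : matched r A B -> exists a b, [/\ a \in A, b \in B & r b a].
Proof.
case/existsP => a1 /existsP[a2 /existsP[b1 /existsP[b2]]].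
by case/and5P => a1A _ b1B _ /and5P[_ _ rba1 _ _]; exists a1, b1.
Qed.

Lemma tangle_layeredP S : is_tangle r S -> exists l, tangle_layered S l.
Proof.
case/existsP => A /existsP[B] /and4P[topA botB mAB /eqP ->].
have [l [levB levA]] := matched_levels topA botB mAB.
have [a1 [b1 [a1A b1B rba1]]] := matched_rel mAB.
case/andP: topA => cardA /existsP[a0 /eqP EA]; case/andP: botB => cardB /existsP[b0 /eqP EB].
have symT : connect_sym (top_rel r) by apply: sym_connect_sym => ? ?; rewrite /top_rel andbC.
have symB : connect_sym (bot_rel r) by apply: sym_connect_sym => ? ?; rewrite /bot_rel andbC.
have closedA : {in A, forall a y, top_rel r a y -> y \in A}.
  by move=> a; rewrite EA !inE => a0a y ay; rewrite inE; apply: connect_trans a0a (connect1 ay).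
have closedB : {in B, forall b y, bot_rel r b y -> y \in B}.
  by move=> b; rewrite EB !inE => b0b y b_y; rewrite inE; apply: connect_trans b0b (connect1 b_y).
exists l; split.
- by exists b1; rewrite ?inE ?b1B ?orbT ?levB.
- by move=> x /setUP[/levA | /levB] ->; [right | left].
- move=> x /setUP[xA | xB] lx; last by move: lx; rewrite levB // => /n_Sn.
  split; first by rewrite EA inE in cardA xA; apply: (component_neighbour symT cardA xA).
  have a1x : connect (top_rel r) a1 x.
    by rewrite EA !inE in a1A xA; rewrite symT in a1A; apply: connect_trans a1A xA.
  have [b bB rbx] := connect_top_below closedB a1x (ex_intro2 _ _ b1 b1B rba1).
  by exists b; rewrite ?inE ?bB ?orbT.
- move=> x /setUP[xA | xB] lx; first by move: lx; rewrite levA // => /esym /n_Sn.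
  split; first by rewrite EB inE in cardB xB; apply: (component_neighbour symB cardB xB).
  have b1x : connect (bot_rel r) b1 x.
    by rewrite EB !inE in b1B xB; rewrite symB in b1B; apply: connect_trans b1B xB.
  (* [bot_rel r] is [top_rel] of the converse order. *)
  have [a aA rxa] := connect_top_below (r := fun x y => r y x) closedA b1x
    (ex_intro2 _ _ a1 a1A rba1).
  by exists a; rewrite ?inE ?aA.
Qed.

Lemma Dset_level a b : Dset r a = Dset r b -> level r a = level r b.
Proof.
have le u v : Dset r u = Dset r v -> level r u <= level r v.
  move=> Euv; have := level_gt0 v; case lv: (level r v) => [//|k] _.
  have : v \in below r k.+1 by rewrite in_below_level lv.
  rewrite -in_below_level !below_succ !inE => /forallP vk; apply/forallP => y.
  have := congr1 (fun D : {set T} => y \in D) Euv; by rewrite !inE => ->.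
by move=> Eab; apply/eqP; rewrite eqn_leq !le.
Qed.

Lemma clone_eq S x : is_clone r S -> x \in S ->
  S = [set y | ~~ in_tangle r y && approx r x y].
Proof.
case/existsP => x0 /andP[_ /eqP ->]; rewrite inE => /andP[_ /andP[/eqP D0 /eqP U0]].
by apply/setP => y; rewrite !inE /approx D0 U0.
Qed.

Lemma clone_nonempty S : is_clone r S -> exists x, x \in S.
Proof. by case/existsP => x /andP[nx /eqP ->]; exists x; rewrite inE nx /approx !eqxx. Qed.

Lemma clone_notin_tangle S x : is_clone r S -> x \in S -> ~~ in_tangle r x.
Proof. by move=> cS xS; move: (xS); rewrite (clone_eq cS xS) inE => /andP[]. Qed.

Lemma clone_Dset S a b : is_clone r S -> a \in S -> b \in S -> Dset r a = Dset r b.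
Proof. by move=> cS aS; rewrite (clone_eq cS aS) inE => /and3P[_ /eqP]. Qed.

Lemma clone_level S a b : is_clone r S -> a \in S -> b \in S -> level r a = level r b.
Proof. by move=> cS aS bS; apply/Dset_level/(clone_Dset cS). Qed.

Lemma clone_norel S a b : is_clone r S -> a \in S -> b \in S -> r a b = false.
Proof.
move=> cS aS bS; apply/negP => rab.
by have := congr1 (fun D : {set T} => a \in D) (clone_Dset cS aS bS); rewrite !inE rab r_irr.
Qed.

Lemma tangle_in_tangle S x : is_tangle r S -> x \in S -> in_tangle r x.
Proof. by move=> tS xS; apply/existsP; exists S; rewrite tS. Qed.

Lemma clone_not_tangle S : is_clone r S -> is_tangle r S = false.
Proof.
case/existsP => x /andP[nx /eqP ES]; apply: (contraNF _ nx) => tS.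
by apply: (tangle_in_tangle tS); rewrite ES inE nx /approx !eqxx.
Qed.

Lemma part_cover x : exists2 S, is_part r S & x \in S.
Proof.
have [tx | nx] := boolP (in_tangle r x).
  by case/existsP: tx => S /andP[tS xS]; exists S; rewrite // /is_part tS orbT.
exists [set y | ~~ in_tangle r y && approx r x y]; last by rewrite inE nx /approx !eqxx.
by apply/orP; left; apply/existsP; exists x; rewrite nx eqxx.
Qed.

Lemma clone_letter S x : is_clone r S -> x \in S -> part_letter r S = C (level r x).
Proof.
move=> cS xS; rewrite /part_letter clone_not_tangle //.
by case: pickP => [y yS | /(_ x)]; rewrite ?xS //= (clone_level cS yS xS).
Qed.

Lemma layered_level S l x : tangle_layered S l -> x \in S ->
  level r x = if [exists y in S, r x y] then l else l.+1.
Proof.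
case=> _ levS _ botS xS; case: ifPn => [/existsP[y /andP[yS rxy]] | /exists_inPn nx].
  by have := rel_level_lt rxy; case: (levS x xS) => //; case: (levS y yS) => -> ->; nat_arith.
case: (levS x xS) => // lx; have [_ [y yS rxy]] := botS x xS lx.
by move: (nx y yS); rewrite rxy.
Qed.

Lemma tangle_letter S l : is_tangle r S -> tangle_layered S l -> part_letter r S = Tl l.
Proof.
move=> tS layS; rewrite /part_letter tS; congr Tl.
case: (layS) => [[x xS lx] levS _ _]; apply: foldr_minn_eq.
- by rewrite -lx level_le_card.
- by rewrite -lx; apply: image_f.
- by apply/allP => k /imageP[y yS ->]; case: (levS y yS) => ->.
Qed.

Lemma layered_rel_succ S l x y : tangle_layered S l -> x \in S -> y \in S -> r x y ->
  level r y = (level r x).+1.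
Proof.
case=> _ levS _ _ xS yS rxy; have := rel_level_lt rxy.
by case: (levS x xS) => ->; case: (levS y yS) => ->; nat_arith.
Qed.

Section Listing.
Variable X : seq {set T}.
Hypothesis compX : compatible r X.

Lemma compatible_adjacent_lt i j a b : i < size X -> j < size X -> i != j ->
  a \in nth set0 X i -> b \in nth set0 X j -> r a b -> level r b = (level r a).+1 -> i < j.
Proof.
case: compX => _ _ _ relX iX jX ij aS bS rab lb.
by move: (relX i j iX jX ij a b aS bS); rewrite rab lb addn1 addn2 ltnn eqxx.
Qed.

Lemma compatible_cover x : exists2 i, i < size X & x \in nth set0 X i.
Proof.
have [S pS xS] := part_cover x; case: compX => _ _ coverX _.
by exists (index S X); rewrite ?nth_index ?index_mem ?coverX.
Qed.

(* If [x] lay in two tangles, its neighbours in them would force each tangle to precede the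
   other in the listing. *)
Lemma compatible_tangles_disjoint i j x : i < size X -> j < size X ->
  is_tangle r (nth set0 X i) -> is_tangle r (nth set0 X j) ->
  x \in nth set0 X i -> x \in nth set0 X j -> i = j.
Proof.
move=> iX jX ti tj xi xj; apply/eqP/negPn/negP => ij; have ji : j != i by rewrite eq_sym.
have [li layi] := tangle_layeredP ti; case: (layi) => _ levi topi boti.
have [lj layj] := tangle_layeredP tj; case: (layj) => _ levj topj botj.
case: (levi x xi) => lxi; case: (levj x xj) => lxj.
- have [_ [y yi rxy]] := boti x xi lxi; have [_ [y' yj rxy']] := botj x xj lxj.
  have lt_ij := compatible_adjacent_lt iX jX ij xi yj rxy' (layered_rel_succ layj xj yj rxy').
  have lt_ji := compatible_adjacent_lt jX iX ji xj yi rxy (layered_rel_succ layi xi yi rxy).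
  by move: (ltn_trans lt_ij lt_ji); rewrite ltnn.
- have [[y bot] _] := boti x xi lxi; have [[y' top] _] := topj x xj lxj.
  by case: (top_bot_rel_exclusive top bot).
- have [[y top] _] := topi x xi lxi; have [[y' bot] _] := botj x xj lxj.
  by case: (top_bot_rel_exclusive top bot).
have [_ [y yi ryx]] := topi x xi lxi; have [_ [y' yj ry'x]] := topj x xj lxj.
have lt_ji := compatible_adjacent_lt jX iX ji yj xi ry'x (layered_rel_succ layj yj xj ry'x).
have lt_ij := compatible_adjacent_lt iX jX ij yi xj ryx (layered_rel_succ layi yi xi ryx).
by move: (ltn_trans lt_ij lt_ji); rewrite ltnn.
Qed.

Lemma compatible_part_uniq i j x : i < size X -> j < size X ->
  x \in nth set0 X i -> x \in nth set0 X j -> i = j.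
Proof.
move=> iX jX xi xj; have [uX partX _ _] := compX.
have part k : k < size X -> is_part r (nth set0 X k).
  by move=> kX; apply: (allP partX); exact: mem_nth.
case/orP: (part i iX) => [ci | ti]; case/orP: (part j jX) => [cj | tj].
- by apply/eqP; rewrite -(nth_uniq set0 iX jX uX) (clone_eq ci xi) (clone_eq cj xj).
- by move: (clone_notin_tangle ci xi); rewrite (tangle_in_tangle tj xj).
- by move: (clone_notin_tangle cj xj); rewrite (tangle_in_tangle ti xi).
exact: compatible_tangles_disjoint ti tj xi xj.
Qed.
End Listing.
End Poset.

Lemma eq_card_bij_in (T T' : finType) (S : {set T}) (S' : {set T'}) (y0 : T') :
  #|S| = #|S'| -> exists g : T -> T', {in S &, injective g} /\ g @: S = S'.
Proof.
move=> card; pose g a := nth y0 (enum S') (index a (enum S)).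
have ltS a : a \in S -> index a (enum S) < size (enum S').
  by rewrite -cardE -card cardE index_mem mem_enum.
have gS a : a \in S -> g a \in S' by move=> aS; rewrite -mem_enum mem_nth ?ltS.
have g_inj : {in S &, injective g}.
  move=> a b aS bS /eqP; rewrite nth_uniq ?enum_uniq ?ltS // => /eqP /(congr1 (nth a (enum S))).
  by rewrite !nth_index ?mem_enum.
exists g; split => //; apply/eqP; rewrite eqEcard (card_in_imset g_inj) card leqnn andbT.
by apply/subsetP => _ /imsetP[a aS ->]; apply: gS.
Qed.

Section Iso.
Variables (T T' : finType) (r : rel T) (r' : rel T').
Hypotheses (ord_r : strict_order r) (ord_r' : strict_order r').
Hypotheses (free_r : free31 r) (free_r' : free31 r').

Definition level_iso (S : {set T}) (S' : {set T'}) (g : T -> T') : Prop := [/\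
  {in S &, injective g}, g @: S = S',
  {in S &, forall a b, r a b = r' (g a) (g b)} &
  {in S, forall a, level r' (g a) = level r a}].

Lemma clone_level_iso S S' : is_clone r S -> is_clone r' S' ->
  part_letter r S = part_letter r' S' -> #|S| = #|S'| -> exists g, level_iso S S' g.
Proof.
move=> cS cS' letter card.
have [x xS] := clone_nonempty cS; have [x' x'S'] := clone_nonempty cS'.
move: letter; rewrite (clone_letter ord_r cS xS) (clone_letter ord_r' cS' x'S') => -[lx].
have [g [g_inj gS]] := eq_card_bij_in x' card.
have gS' a : a \in S -> g a \in S' by move=> aS; rewrite -gS imset_f.
exists g; split => // [a b aS bS | a aS].
  by rewrite (clone_norel ord_r cS aS bS) (clone_norel ord_r' cS' (gS' a aS) (gS' b bS)).
by rewrite (clone_level ord_r' cS' (gS' a aS) x'S') -lx (clone_level ord_r cS xS aS).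
Qed.

Lemma tangle_level_iso S S' g : is_tangle r S -> is_tangle r' S' ->
  part_letter r S = part_letter r' S' -> {in S &, injective g} -> g @: S = S' ->
  {in S &, forall a b, r a b = r' (g a) (g b)} -> level_iso S S' g.
Proof.
move=> tS tS' letter g_inj gS g_rel.
have [l layS] := tangle_layeredP ord_r free_r tS.
have [l' layS'] := tangle_layeredP ord_r' free_r' tS'.
move: letter; rewrite (tangle_letter ord_r tS layS) (tangle_letter ord_r' tS' layS') => -[ll'].
rewrite -{}ll' in layS'.
split => // a aS; have gaS' : g a \in S' by rewrite -gS imset_f.
rewrite (layered_level ord_r' layS' gaS') (layered_level ord_r layS aS) -gS.
congr (if _ then _ else _).
apply/existsP/existsP => [[_ /andP[/imsetP[b bS ->]]] | [b /andP[bS]]].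
  by rewrite -g_rel // => rab; exists b; rewrite bS.
by rewrite g_rel // => rab; exists (g b); rewrite imset_f.
Qed.

Lemma part_level_iso S S' : is_part r S -> is_part r' S' ->
  part_letter r S = part_letter r' S' ->
  (is_clone r S -> #|S| = #|S'|) -> (is_tangle r S -> induced_iso r r' S S') ->
  exists g, level_iso S S' g.
Proof.
move=> pS pS' letter cardS isoS.
case/orP: pS => [cS | tS]; case/orP: pS' => [cS' | tS'].
- exact: clone_level_iso cS cS' letter (cardS cS).
- have [x xS] := clone_nonempty cS; have [l' layS'] := tangle_layeredP ord_r' free_r' tS'.
  by move: letter; rewrite (clone_letter ord_r cS xS) (tangle_letter ord_r' tS' layS').
- have [x' x'S'] := clone_nonempty cS'; have [l layS] := tangle_layeredP ord_r free_r tS.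
  by move: letter; rewrite (clone_letter ord_r' cS' x'S') (tangle_letter ord_r tS layS).
have [g [g_inj gS g_rel]] := isoS tS.
by exists g; apply: tangle_level_iso.
Qed.

Lemma compatible_glue X Y (G : 'I_(size X) -> T -> T') :
  compatible r X -> compatible r' Y -> size X = size Y ->
  (forall i : 'I_(size X), level_iso (nth set0 X i) (nth set0 Y i) (G i)) -> poset_iso r r'.
Proof.
move=> compX compY sXY isoG.
have [p mem_p] : exists p : T -> 'I_(size X), forall x, x \in nth set0 X (p x).
  apply: (choice (fun x (i : 'I_(size X)) => x \in nth set0 X i)) => x.
  by have [i iX xi] := compatible_cover compX x; exists (Ordinal iX).
have p_uniq x (i : 'I_(size X)) : x \in nth set0 X i -> i = p x.
  move=> xi; apply: val_inj => /=.
  exact: (compatible_part_uniq ord_r free_r compX (ltn_ord i) (ltn_ord (p x)) xi (mem_p x)).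
pose F x := G (p x) x.
have FY x : F x \in nth set0 Y (p x) by case: (isoG (p x)) => _ <- _ _; apply/imset_f/mem_p.
have F_level x : level r' (F x) = level r x by case: (isoG (p x)) => _ _ _ ->.
have F_inj : injective F.
  move=> a b Fab; have pab : p a = p b.
    apply: val_inj; apply: (compatible_part_uniq ord_r' free_r' compY _ _ (FY a));
      by rewrite -?sXY ?ltn_ord // Fab FY.
  case: (isoG (p a)) => G_inj _ _ _; move: Fab; rewrite /F -pab.
  by apply: G_inj; rewrite // pab.
have F_onto y : y \in codom F.
  have [i iY yi] := compatible_cover compY y; rewrite -sXY in iY.
  case: (isoG (Ordinal iY)) => _ GXY _ _; rewrite -GXY in yi.
  by case/imsetP: yi => x xi ->; rewrite (p_uniq x _ xi); apply: codom_f.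
exists F; split.
  apply: inj_card_bij => //; rewrite -(card_codom F_inj).
  by apply/subset_leq_card/subsetP => y _; apply: F_onto.
move=> a b; have [pab | npab] := eqVneq (p a) (p b).
  by case: (isoG (p a)) => _ _ G_rel _; rewrite /F -pab G_rel ?mem_p // pab mem_p.
case: compX compY => _ _ _ relX [_ _ _ relY].
rewrite (relX _ _ (ltn_ord (p a)) (ltn_ord (p b)) npab a b (mem_p a) (mem_p b)).
by rewrite (relY (p a) (p b)) ?FY -?sXY ?ltn_ord // !F_level.
Qed.
End Iso.

Theorem corollary3p10 (T T' : finType) (r : rel T) (r' : rel T')
  (X : seq {set T}) (Y : seq {set T'}) :
  strict_order r -> strict_order r' -> free31 r -> free31 r' ->
  same_skeleton r r' ->
  compatible r X -> compatible r' Y -> word r X = word r' Y ->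
  (forall i, i < size X ->
     (is_clone r (nth set0 X i) -> #|nth set0 X i| = #|nth set0 Y i|) /\
     (is_tangle r (nth set0 X i) -> induced_iso r r' (nth set0 X i) (nth set0 Y i))) ->
  poset_iso r r'.
Proof.
move=> ord_r ord_r' free_r free_r' _ compX compY wordXY parts.
have sXY : size X = size Y.
  by rewrite -(size_map (part_letter r)) -(size_map (part_letter r')) -!/(word _ _) wordXY.
have [G isoG] : exists G : 'I_(size X) -> T -> T',
    forall i : 'I_(size X), level_iso r r' (nth set0 X i) (nth set0 Y i) (G i).
  apply: (choice (fun i : 'I_(size X) => level_iso r r' (nth set0 X i) (nth set0 Y i))) => i.
  have [cardi isoi] := parts i (ltn_ord i).
  have [_ partX _ _] := compX; have [_ partY _ _] := compY.
  apply: part_level_iso cardi isoi => //.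
  - by apply: (allP partX); rewrite mem_nth.
  - by apply: (allP partY); rewrite mem_nth -?sXY.
  - by have := congr1 (nth (C 0) ^~ i) wordXY; rewrite !(nth_map set0) -?sXY.
exact: compatible_glue compX compY sXY isoG.
Qed.
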